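(* Let $H$ be a finite set of non-vertical hyperplanes in $\mathbb{R}^d$ in generic coordinate position, and let $C$ be a $d$-dimensional cell of $\mathcal{A}(H)$. Let $\sigma$ be a first-stage prism of $C$ whose ceiling lies on the hyperplane $h^+$ and whose floor lies on $h^-$. Then for each hyperplane $h\in H\setminus\{h^+,h^-\}$, at most one of the flats $h^+\cap h$ and $h^-\cap h$ supports a $(d-2)$-face of $\partial\sigma$ (other than faces created by the vertical walls). It is $h^+\cap h$ if $C$ lies below $h$, and $h^-\cap h$ if $C$ lies above $h$. Consequently, if $n$ denotes the number of hyperplanes of $H$ supporting facets of $C$, the vertical projection of $\sigma$ onto $x_d=0$ is a convex polyhedron with at most $n-1$ facets.
   Context: For a convex cell $C$, let $f^+$ be a facet on its upper boundary (with respect to $x_d$) lying on the hyperplane $h^+$, and $f^-$ a facet on its lower boundary lying on $h^-$. If the intersection $P$ of the vertical projections of $f^+$ and $f^-$ onto $x_d=0$ is $(d-1)$-dimensional, the set $\sigma=\{p\in C:\text{the projection of } p \text{ lies in } P\}$ is a first-stage prism, with ceiling on $h^+$ and floor on $h^-$. *)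

(* Linear-geometric statement, stated over an arbitrary
   real (ordered) field R; R^d is encoded as R^(d-1) x R with d = k+1,
   the second component being the vertical coordinate x_d. *)
From HB Require Import structures.
From mathcomp Require Import all_boot all_order all_algebra.
Set Implicit Arguments. Unset Strict Implicit. Unset Printing Implicit Defensive.
Import Order.TTheory GRing.Theory Num.Theory.
Local Open Scope ring_scope.

Section Defs.
Variables (R : realFieldType) (k : nat).

Definition vdot (u v : 'rV[R]_k) : R := \sum_(i < k) u 0 i * v 0 i.

Definition point := ('rV[R]_k * R)%type.

(* a non-vertical hyperplane  x_d = a . x' + b , coded by (a, b) *)
Definition hyp := ('rV[R]_k * R)%type.

Definition ht (h : hyp) (x : 'rV[R]_k) : R := vdot h.1 x + h.2.
Definition on_hyp (h : hyp) (p : point) : Prop := p.2 = ht h p.1.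

Definition near (x y : 'rV[R]_k) (eps : R) : Prop :=
  forall i, `|y 0 i - x 0 i| < eps.

Definition full_dim (S : 'rV[R]_k -> Prop) : Prop :=
  exists x eps, 0 < eps /\ forall y, near x y eps -> S y.

Definition normal_row (h : hyp) : 'rV[R]_(k + 1) := row_mx h.1 (const_mx (-1)).
Definition aug_row (h : hyp) : 'rV[R]_(k + 1 + 1) :=
  row_mx (normal_row h) (const_mx h.2).

(* general position: any j <= d distinct hyperplanes meet in a (d-j)-flat
   (normals independent) and any d+1 of them have empty intersection
   (augmented (d+1)x(d+1) system nonsingular). *)
Definition general_position (H : seq hyp) : Prop :=
  forall S : seq hyp, uniq S -> {subset S <= H} -> (size S <= k.+2)%N ->
    row_free (\matrix_(i < size S) aug_row (nth (0, 0) S i)) /\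
    ((size S <= k.+1)%N ->
       row_free (\matrix_(i < size S) normal_row (nth (0, 0) S i))).

(* coefficients of the vertical projection of the flat h1 /\ h2, i.e. of the
   (d-2)-flat { x' : (a1 - a2) . x' + (b1 - b2) = 0 } of R^(d-1) *)
Definition diff_row (h1 h2 : hyp) : 'rV[R]_(k + 1) :=
  row_mx (h1.1 - h2.1) (const_mx (h1.2 - h2.2)).

(* generic coordinate position: general position, and the vertical
   projections of two distinct (d-2)-flats h1/\h2, h3/\h4 are distinct *)
Definition generic_coords (H : seq hyp) : Prop :=
  general_position H /\
  forall h1 h2 h3 h4, h1 \in H -> h2 \in H -> h3 \in H -> h4 \in H ->
    h1 != h2 -> h3 != h4 ->
    ~~ (((h1 == h3) && (h2 == h4)) || ((h1 == h4) && (h2 == h3))) ->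
    row_free (col_mx (diff_row h1 h2) (diff_row h3 h4)).

Definition side (s : bool) (h : hyp) (p : point) : bool :=
  if s then ht h p.1 <= p.2 else p.2 <= ht h p.1.
Definition sside (s : bool) (h : hyp) (p : point) : bool :=
  if s then ht h p.1 < p.2 else p.2 < ht h p.1.

(* C is a (closed) d-dimensional cell of A(H): the closure of a nonempty
   open region given by a sign vector s (s h = true : above h). *)
Definition is_dcell (H : seq hyp) (C : point -> Prop) : Prop :=
  exists s : hyp -> bool,
    (forall p, C p <-> forall h, h \in H -> side (s h) h p) /\
    exists p, forall h, h \in H -> sside (s h) h p.

Definition lies_below (C : point -> Prop) (h : hyp) : Prop :=
  forall p, C p -> p.2 <= ht h p.1.
Definition lies_above (C : point -> Prop) (h : hyp) : Prop :=
  forall p, C p -> ht h p.1 <= p.2.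

Definition supports_facet (C : point -> Prop) (h : hyp) : Prop :=
  full_dim (fun x => C (x, ht h x)).

Definition vproj (S : point -> Prop) : 'rV[R]_k -> Prop :=
  fun x => exists y, S (x, y).

(* P = projection of the facet C/\h+ intersected with projection of C/\h- *)
Definition prism_base (C : point -> Prop) (hp hm : hyp) : 'rV[R]_k -> Prop :=
  fun x => C (x, ht hp x) /\ C (x, ht hm x).

Definition first_stage_prism (H : seq hyp) (C : point -> Prop)
    (hp hm : hyp) (sigma : point -> Prop) : Prop :=
  [/\ hp \in H, lies_below C hp & supports_facet C hp] /\
  [/\ hm \in H, lies_above C hm & supports_facet C hm] /\
  full_dim (prism_base C hp hm) /\
  (forall p, sigma p <-> C p /\ prism_base C hp hm p.1).

(* The flat h1 /\ h2 supports a (d-2)-face of the convex set S: there is a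
   supporting hyperplane L : u.x' + w x_d + c = 0 of S such that the face
   S /\ L is contained in h1 /\ h2 and contains a relatively open piece of
   h1 /\ h2 (so it is (d-2)-dimensional with affine hull h1 /\ h2). *)
Definition supports_ridge (S : point -> Prop) (h1 h2 : hyp) : Prop :=
  exists (u : 'rV[R]_k) (w c : R),
    [/\ (u != 0) || (w != 0),
        forall p, S p -> vdot u p.1 + w * p.2 + c <= 0,
        forall p, S p -> vdot u p.1 + w * p.2 + c = 0 -> on_hyp h1 p /\ on_hyp h2 p
      & exists x0 eps, [/\ ht h1 x0 = ht h2 x0, 0 < eps &
          forall y, ht h1 y = ht h2 y -> near x0 y eps ->
            S (y, ht h1 y) /\ vdot u y + w * ht h1 y + c = 0]].

Definition polyhedron (Q : 'rV[R]_k -> Prop) : Prop :=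
  exists Hs : seq ('rV[R]_k * R),
    forall x, Q x <-> all (fun ce => vdot ce.1 x <= ce.2) Hs.

Definition facet_hyp (Q : 'rV[R]_k -> Prop) (c : 'rV[R]_k) (e : R) : Prop :=
  [/\ c != 0, forall x, Q x -> vdot c x <= e
    & exists x0 eps, [/\ vdot c x0 = e, 0 < eps &
        forall y, vdot c y = e -> near x0 y eps -> Q y]].

(* Q has at most m facets: the facet-supporting hyperplanes of Q are among
   at most m hyperplanes *)
Definition at_most_facets (Q : 'rV[R]_k -> Prop) (m : nat) : Prop :=
  exists Ls : seq ('rV[R]_k * R), (size Ls <= m)%N /\
    forall c e, facet_hyp Q c e ->
      exists2 ce, ce \in Ls & forall x, vdot c x = e <-> vdot ce.1 x = ce.2.

End Defs.

From HB Require Import structures.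
From mathcomp Require Import all_boot all_order all_algebra ring lra.
From Stdlib Require Import Classical.
Set Implicit Arguments. Unset Strict Implicit. Unset Printing Implicit Defensive.
Import Order.TTheory GRing.Theory Num.Theory.
Local Open Scope ring_scope.

(* The cell [C] is cut out by one linear inequality per hyperplane, so the
   projection of the prism is the set of [x'] at which both the ceiling point
   and the floor point satisfy all of them: a polyhedron each of whose facets
   lies on the projection of a flat [hp /\ h] or [hm /\ h].  On a relatively
   open piece of the projection of [hp /\ h] the ceiling lies on [h]; if [C]
   were above [h] the floor would be squeezed onto [h] there, so [hp /\ h] and
   [hm /\ h] would project onto a common piece, against generic coordinate
   position.  Thus [hp /\ h] only occurs when [C] is below [h] and [hm /\ h]
   only when [C] is above [h].  Such an [h] supports a facet of [C], since by
   general position the piece can be pushed off every other hyperplane;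
   together with [hp /\ hm] this leaves at most [n - 1] facets. *)

Section LinearForms.
Variables (R : realFieldType) (k : nat).
Implicit Types (u v w x y z : 'rV[R]_k) (p q : 'rV[R]_k * R).

Lemma vdotC u v : vdot u v = vdot v u.
Proof. by apply: eq_bigr => i _; rewrite mulrC. Qed.

Lemma vdotDl u v w : vdot (u + v) w = vdot u w + vdot v w.
Proof. by rewrite /vdot -big_split; apply: eq_bigr => i _; rewrite mxE mulrDl. Qed.

Lemma vdotNl u w : vdot (- u) w = - vdot u w.
Proof. by rewrite /vdot -sumrN; apply: eq_bigr => i _; rewrite mxE mulNr. Qed.

Lemma vdotBl u v w : vdot (u - v) w = vdot u w - vdot v w.
Proof. by rewrite vdotDl vdotNl. Qed.

Lemma vdotZl a u w : vdot (a *: u) w = a * vdot u w.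
Proof. by rewrite /vdot mulr_sumr; apply: eq_bigr => i _; rewrite mxE mulrA. Qed.

Lemma vdot0l w : vdot 0 w = 0.
Proof. by rewrite /vdot big1 // => i _; rewrite mxE mul0r. Qed.

Lemma vdotDr u v w : vdot w (u + v) = vdot w u + vdot w v.
Proof. by rewrite !(vdotC w) vdotDl. Qed.

Lemma vdotBr u v w : vdot w (u - v) = vdot w u - vdot w v.
Proof. by rewrite !(vdotC w) vdotBl. Qed.

Lemma vdotZr a u w : vdot w (a *: u) = a * vdot w u.
Proof. by rewrite !(vdotC w) vdotZl. Qed.

Lemma vdot0r w : vdot w 0 = 0.
Proof. by rewrite vdotC vdot0l. Qed.

Lemma vdot_ge0 u : 0 <= vdot u u.
Proof. by rewrite sumr_ge0 // => i _; rewrite -expr2 sqr_ge0. Qed.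

Lemma vdot_eq0 u : (vdot u u == 0) = (u == 0).
Proof.
apply/idP/eqP => [|->]; last by rewrite vdot0l.
rewrite psumr_eq0 => [/allP u0|i _]; last by rewrite -expr2 sqr_ge0.
apply/rowP => i; rewrite mxE; apply/eqP; rewrite -sqrf_eq0 expr2.
exact: u0 (mem_index_enum i).
Qed.

Lemma vdot_gt0 u : u != 0 -> 0 < vdot u u.
Proof. by rewrite lt_def vdot_ge0 vdot_eq0 andbT. Qed.

Definition norm1 u : R := \sum_(i < k) `|u 0 i|.

Lemma norm1_ge0 u : 0 <= norm1 u.
Proof. exact: sumr_ge0. Qed.

Lemma norm1D1_gt0 u : 0 < 1 + norm1 u.
Proof. by rewrite ltr_pwDl ?norm1_ge0. Qed.

Lemma near_refl x r : 0 < r -> near x x r.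
Proof. by move=> r0 i; rewrite subrr normr0. Qed.

Lemma near_le x y r r' : near x y r -> r <= r' -> near x y r'.
Proof. by move=> xy rr' i; exact: lt_le_trans (xy i) rr'. Qed.

Lemma near_half x y z r : near x y (r / 2) -> near y z (r / 2) -> near x z r.
Proof.
move=> xy yz i; rewrite -(subrK (y 0 i) (z 0 i)) -addrA (splitr r).
by apply: le_lt_trans (ler_normD _ _) _; rewrite ltrD.
Qed.

Lemma near_addZ x v r t : `|t| * (1 + norm1 v) < r -> near x (x + t *: v) r.
Proof.
move=> tr i; rewrite !mxE addrAC subrr add0r normrM; apply: le_lt_trans tr.
rewrite ler_wpM2l // ler_wpDl // /norm1 (bigD1 i) //= ler_wpDr ?sumr_ge0 //.
Qed.

Lemma near_vdot a x y r : near x y r -> `|vdot a y - vdot a x| <= norm1 a * r.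
Proof.
move=> xy; rewrite -vdotBr /vdot /norm1 mulr_suml.
apply: le_trans (ler_norm_sum _ _ _) _; apply: ler_sum => i _.
by rewrite normrM ler_wpM2l // !mxE ltW.
Qed.

Definition aff p x : R := vdot p.1 x + p.2.

Lemma aff_near_gt0 p x y :
  0 < aff p y -> near y x (aff p y / (1 + norm1 p.1)) -> 0 < aff p x.
Proof.
move=> py /(near_vdot p.1); rewrite distrC => dist.
have small : norm1 p.1 * (aff p y / (1 + norm1 p.1)) < aff p y.
  by rewrite mulrCA gtr_pMr // ltr_pdivrMr ?norm1D1_gt0 // mul1r ltrDr.
have := le_lt_trans (ler_norm _) (le_lt_trans dist small).
by rewrite /aff in py *; lra.
Qed.

(* Split [q.1] into a multiple of [p.1] plus an orthogonal residual [v]: moving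
   along [v] stays on the hyperplane and changes [aff q] by a multiple of
   [vdot q.1 v] of either sign, so [vdot q.1 v = 0], i.e. [v = 0]. *)
Lemma aff_proportional p q z r :
  0 < r -> aff p z = 0 -> aff q z = 0 ->
  (forall y, near z y r -> aff p y = 0 -> aff q y <= 0) ->
  exists l, q.1 = l *: p.1 /\ q.2 = l * p.2.
Proof.
move=> r0 pz qz qle.
set l := vdot q.1 p.1 / vdot p.1 p.1; set v := q.1 - l *: p.1.
have pv0 : vdot p.1 v = 0.
  rewrite vdotBr vdotZr vdotC /l.
  have [/eqP|pp0] := eqVneq (vdot p.1 p.1) 0; last by rewrite mulfVK ?subrr.
  by rewrite vdot_eq0 => /eqP ->; rewrite !vdot0r !mul0r subrr.
set t := r / (2 * (1 + norm1 v)).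
have t0 : 0 < t by rewrite divr_gt0 ?mulr_gt0 ?norm1D1_gt0.
have step (u : R) : `|u| = t -> u * vdot q.1 v <= 0.
  move=> ut; have near_zu : near z (z + u *: v) r.
    have n0 := norm1D1_gt0 v.
    apply: near_addZ; have -> : `|u| * (1 + norm1 v) = r / 2.
      by rewrite ut /t; field; rewrite gt_eqF.
    by rewrite ltr_pdivrMr // ltr_pMr // ltr1n.
  move: (qle _ near_zu) pz qz; rewrite /aff !(vdotDr z) !vdotZr pv0 mulr0 addr0.
  by move=> + pz qz; rewrite pz; move/(_ erefl); lra.
have qv0 : vdot q.1 v = 0.
  have := step t (gtr0_norm t0); have := step (- t).
  by rewrite normrN gtr0_norm // => /(_ erefl); nra.
have q1E : q.1 = l *: p.1.
  apply/eqP; rewrite -subr_eq0 -/v -vdot_eq0 {1}/v vdotBl vdotZl qv0 pv0.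
  by rewrite mulr0 subrr.
exists l; split => //.
have lpz : l * aff p z = 0 by rewrite pz mulr0.
by move: qz lpz; rewrite /aff q1E vdotZl; lra.
Qed.

Lemma aff_proportional_eq p q z r :
  0 < r -> aff p z = 0 ->
  (forall y, near z y r -> aff p y = 0 -> aff q y = 0) ->
  exists l, q.1 = l *: p.1 /\ q.2 = l * p.2.
Proof.
move=> r0 pz qeq; apply: (aff_proportional r0 pz (qeq _ (near_refl z r0) pz)).
by move=> y zy py; rewrite qeq.
Qed.

Lemma aff_addZ q x a v : aff q (x + a *: v) = aff q x + a * vdot q.1 v.
Proof. by rewrite /aff vdotDr vdotZr addrAC. Qed.

Lemma small_step_nonneg (Phi : seq ('rV[R]_k * R)) x v :
  (forall q, q \in Phi -> 0 <= aff q x /\ (0 < aff q x \/ 0 <= vdot q.1 v)) ->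
  exists2 t, 0 < t & forall q, q \in Phi -> 0 <= aff q (x + t *: v).
Proof.
move=> Phi_ok; suff [t t0 Ht] : exists2 t, 0 < t &
    forall q, q \in Phi -> forall a, 0 <= a <= t -> 0 <= aff q (x + a *: v).
  by exists t => // q qP; apply: Ht; rewrite // lexx ltW.
elim: Phi Phi_ok => [|q Phi IH] Phi_ok; first by exists 1.
have [t t0 Ht] := IH (fun q' q'P => Phi_ok q' (mem_behead (s := q :: Phi) q'P)).
have [q0 q_ok] := Phi_ok q (mem_head _ _).
have [qv_neg|qv0] := ltP (vdot q.1 v) 0; last first.
  exists t => // q'; rewrite inE => /predU1P [-> a /andP [a0 _]|/Ht //].
  by rewrite aff_addZ addr_ge0 ?mulr_ge0.
have qx0 : 0 < aff q x by case: q_ok => //; rewrite leNgt qv_neg.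
have bound0 : 0 < aff q x / - vdot q.1 v by rewrite divr_gt0 ?oppr_gt0.
exists (Order.min t (aff q x / - vdot q.1 v)); first by rewrite lt_min t0.
move=> q'; rewrite inE => /predU1P [-> a /andP [a0]|q'P a /andP [a0]];
  rewrite le_min => /andP [ut ub]; last by apply: Ht; rewrite ?a0.
by move: ub; rewrite aff_addZ ler_pdivlMr ?oppr_gt0 //; lra.
Qed.

Section Polyhedron.
Variables (Phi : seq ('rV[R]_k * R)) (Q : 'rV[R]_k -> Prop).
Hypothesis QE : forall x, Q x <-> forall q, q \in Phi -> 0 <= aff q x.

(* Otherwise a small step from [x0] along [c] stays in [Q] and increases [vdot c]. *)
Lemma tight_constraint c e x0 :
  c != 0 -> (forall x, Q x -> vdot c x <= e) -> Q x0 -> vdot c x0 = e ->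
  exists2 q, q \in Phi & aff q x0 = 0 /\ vdot q.1 c < 0.
Proof.
move=> c0 Qle Qx0 cx0.
have [/hasP [q qP /andP [/eqP qx0 qc]]|/hasPn loose] :=
  boolP (has (fun q => (aff q x0 == 0) && (vdot q.1 c < 0)) Phi); first by exists q.
have [|t t0 Ht] := @small_step_nonneg Phi x0 c.
  move=> q qP; have q0 := (QE x0).1 Qx0 q qP; split => //.
  have [|qx0] := ltP 0 (aff q x0); [by left|right].
  have : aff q x0 = 0 by apply/eqP; rewrite eq_le qx0 q0.
  by move: (loose q qP) => /[swap] ->; rewrite eqxx /= -leNgt.
have := Qle _ ((QE _).2 Ht); rewrite vdotDr vdotZr cx0.
by have := mulr_gt0 t0 (vdot_gt0 c0); lra.
Qed.

Lemma facet_hyp_constraint c e : facet_hyp Q c e ->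
  exists2 q, q \in Phi & forall x, vdot c x = e <-> aff q x = 0.
Proof.
move=> [c0 Qle [x0 [eps [cx0 eps0 piece]]]].
have [q qP [qx0 qc]] := tight_constraint c0 Qle (piece _ cx0 (near_refl x0 eps0)) cx0.
have [l [ql1 ql2]] : exists l, (- q.1) = l *: c /\ - q.2 = l * - e.
  apply: (@aff_proportional (c, - e) (- q.1, - q.2) x0 eps) => //=.
  - by rewrite /aff /= cx0 subrr.
  - by rewrite /aff vdotNl -opprD -/(aff q x0) qx0 oppr0.
  move=> y x0y; rewrite /aff /= vdotNl => cy.
  have := (QE y).1 (piece y _ x0y) q qP; rewrite /aff; lra.
have l0 : 0 < l.
  by have := vdot_gt0 c0; move: qc; rewrite -[q.1]opprK ql1 vdotNl vdotZl; nra.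
exists q => // x; have -> : aff q x = l * (e - vdot c x).
  by rewrite /aff -[q.1]opprK -[q.2]opprK ql1 ql2 vdotNl vdotZl; ring.
split => [->|/eqP]; first by rewrite subrr mulr0.
by rewrite mulf_eq0 (gt_eqF l0) subr_eq0 => /eqP ->.
Qed.

End Polyhedron.

(* Deal with the functions one at a time: the next one does not vanish at some
   point [y] of the current ball on the hyperplane, so it is positive on a
   small ball around [y]. *)
Lemma hyperplane_point_all_pos p (Ps : seq ('rV[R]_k * R)) z r :
  0 < r -> aff p z = 0 ->
  (forall q, q \in Ps -> forall y, near z y r -> aff p y = 0 -> 0 <= aff q y) ->
  (forall q, q \in Ps -> forall z' r', 0 < r' -> aff p z' = 0 ->
     ~ (forall y, near z' y r' -> aff p y = 0 -> aff q y = 0)) ->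
  exists z' r', [/\ 0 < r', aff p z' = 0, (forall y, near z' y r' -> near z y r)
    & forall q, q \in Ps -> forall y, near z' y r' -> 0 < aff q y].
Proof.
move=> r0 pz; elim: Ps => [|q Ps IH] nonneg nonzero.
  by exists z, r; split => // q; rewrite in_nil.
have [||z1 [r1 [r10 pz1 z1z pos1]]] := IH.
- by move=> q' q'P; apply: nonneg; rewrite inE q'P orbT.
- by move=> q' q'P; apply: nonzero; rewrite inE q'P orbT.
have r1half : 0 < r1 / 2 by rewrite divr_gt0.
have [y not_zero_y] := not_all_ex_not _ _ (nonzero q (mem_head _ _) z1 _ r1half pz1).
have [z1y not_zero_y'] := imply_to_and _ _ not_zero_y.
have [py qy] := imply_to_and _ _ not_zero_y'.
have z1y' : near z1 y r1 by apply: near_le z1y _; rewrite ler_pdivrMr // ler_pMr // ler1n.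
have qy0 : 0 < aff q y.
  by rewrite lt_def (introN eqP qy) (nonneg _ (mem_head _ _) _ (z1z _ z1y') py).
exists y, (Order.min (r1 / 2) (aff q y / (1 + norm1 q.1))); split => //.
- by rewrite lt_min r1half divr_gt0 ?norm1D1_gt0.
- move=> x yx; apply/z1z/(near_half z1y)/(near_le yx).
  by rewrite ge_min lexx.
move=> q'; rewrite inE => /predU1P [-> x yx|q'P x yx].
  by apply: aff_near_gt0 qy0 _; apply: near_le yx _; rewrite ge_min lexx orbT.
by apply/(pos1 _ q'P)/(near_half z1y)/(near_le yx); rewrite ge_min lexx.
Qed.

End LinearForms.

Section Hyperplanes.
Variables (R : realFieldType) (k : nat).
Implicit Types (g h i j : hyp R k) (x y : 'rV[R]_k).

Definition hdiff g h : 'rV[R]_k * R := (g.1 - h.1, g.2 - h.2).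

Lemma aff_hdiff g h x : aff (hdiff g h) x = ht g x - ht h x.
Proof. by rewrite /aff vdotBl /ht /=; ring. Qed.

Lemma aff_hdiff_eq0 g h x : aff (hdiff g h) x = 0 <-> ht g x = ht h x.
Proof. by rewrite aff_hdiff; split => [/eqP|->]; rewrite ?subr_eq0 ?subrr => // /eqP. Qed.

Lemma hyp_eq_of_ht g h z : g.1 = h.1 -> ht g z = ht h z -> g = h.
Proof. by case: g h => [a b] [a' b'] /= <-; rewrite /ht /= => /addrI ->. Qed.

Definition side_aff (b : bool) i g : 'rV[R]_k * R := if b then hdiff g i else hdiff i g.

Lemma aff_side_aff b i g x :
  aff (side_aff b i g) x = if b then ht g x - ht i x else ht i x - ht g x.
Proof. by case: b; rewrite aff_hdiff. Qed.

Lemma side_affE b i g x : side b i (x, ht g x) = (0 <= aff (side_aff b i g) x).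
Proof. by rewrite aff_side_aff /side; case: b; rewrite subr_ge0. Qed.

Definition flat_eqn g h : 'rV[R]_k * R := (g.1 - h.1, h.2 - g.2).

Lemma flat_eqnE g h x : vdot (flat_eqn g h).1 x = (flat_eqn g h).2 <-> ht g x = ht h x.
Proof. by rewrite vdotBl /ht /=; split => ?; lra. Qed.

Lemma flat_piece_proportional g h i j x0 eps :
  0 < eps -> ht g x0 = ht h x0 ->
  (forall y, near x0 y eps -> ht g y = ht h y -> ht i y = ht j y) ->
  exists l, (hdiff i j).1 = l *: (hdiff g h).1 /\ (hdiff i j).2 = l * (hdiff g h).2.
Proof.
move=> eps0 /aff_hdiff_eq0 gh0 ghij; apply: aff_proportional_eq eps0 gh0 _.
by move=> y x0y /aff_hdiff_eq0 /(ghij y x0y) /aff_hdiff_eq0.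
Qed.

Lemma not_row_free_col_scale n (r : 'rV[R]_n) l : ~ row_free (col_mx r (l *: r)).
Proof.
move=> /row_free_inj inj.
have := inj _ (row_mx (l%:M : 'M_1) (- 1%:M)) 0.
rewrite /= mul_row_col mulNmx mul1mx mul_scalar_mx subrr mul0mx => /(_ erefl) /rowP.
by move=> /(_ (rshift 1 ord0)); rewrite row_mxEr !mxE /= => /eqP; rewrite oppr_eq0 oner_eq0.
Qed.

Lemma generic_coords_no_common_piece (H : seq (hyp R k)) h1 h2 h3 h4 x0 eps :
  generic_coords H -> h1 \in H -> h2 \in H -> h3 \in H -> h4 \in H ->
  h1 != h2 -> h3 != h4 -> ~~ (((h1 == h3) && (h2 == h4)) || ((h1 == h4) && (h2 == h3))) ->
  0 < eps -> ht h1 x0 = ht h2 x0 ->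
  ~ (forall y, near x0 y eps -> ht h1 y = ht h2 y -> ht h3 y = ht h4 y).
Proof.
move=> [_ gen] h1H h2H h3H h4H h12 h34 pairs eps0 x012 piece.
have [l [l1 l2]] := flat_piece_proportional eps0 x012 piece.
have := gen _ _ _ _ h1H h2H h3H h4H h12 h34 pairs.
have -> : diff_row h3 h4 = l *: diff_row h1 h2.
  rewrite /diff_row scale_row_mx -[h3.1 - h4.1]/(hdiff h3 h4).1 l1; congr row_mx.
  by apply/rowP => i; rewrite !mxE -l2.
exact: not_row_free_col_scale.
Qed.

(* [l * g + (1 - l) * h - j] is a vanishing combination of the rows. *)
Lemma aug_rows_dependent g h j l :
  (hdiff j h).1 = l *: (hdiff g h).1 -> (hdiff j h).2 = l * (hdiff g h).2 ->
  ~ row_free (\matrix_(i < size [:: g; h; j]) aug_row (nth (0, 0) [:: g; h; j] i)).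
Proof.
rewrite /hdiff /= => l1 l2 /row_free_inj inj.
have := inj _ (\row_(i < 3) [:: l; 1 - l; -1]`_i) 0.
rewrite /= mulmx_sum_row !big_ord_recl big_ord0 !rowK !mxE /= mul0mx.
have -> : l *: aug_row g + ((1 - l) *: aug_row h + (-1 *: aug_row j + 0)) = 0.
  rewrite addr0 /aug_row /normal_row !scale_row_mx !add_row_mx -!row_mx0.
  congr row_mx; [congr row_mx|]; apply/rowP => i; rewrite !mxE //.
  - by move/rowP: l1 => /(_ i); rewrite !mxE => l1; rewrite -[j.1 0 i](subrK (h.1 0 i)) l1; ring.
  - by ring.
  - by rewrite -[j.2](subrK h.2) l2; ring.
move=> /(_ erefl) /rowP /(_ (inord 2)); rewrite !mxE inordK //= => /eqP.
by rewrite oppr_eq0 oner_eq0.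
Qed.

Lemma general_position_no_common_piece (H : seq (hyp R k)) g h j x0 eps :
  (1 <= k)%N -> general_position H -> g \in H -> h \in H -> j \in H ->
  g != h -> j != g -> j != h -> 0 < eps -> ht g x0 = ht h x0 ->
  ~ (forall y, near x0 y eps -> ht g y = ht h y -> ht j y = ht h y).
Proof.
move=> k1 gen gH hH jH gh jg jh eps0 x0gh piece.
have [l [l1 l2]] := flat_piece_proportional eps0 x0gh piece.
have ghj : uniq [:: g; h; j] by rewrite /= !inE negb_or gh eq_sym jg eq_sym jh.
have ghjH : {subset [:: g; h; j] <= H} by move=> x; rewrite !inE => /or3P [] /eqP ->.
exact: aug_rows_dependent l1 l2 (gen _ ghj ghjH k1).1.
Qed.

End Hyperplanes.

Section Cell.
Variables (R : realFieldType) (k : nat) (H : seq (hyp R k)) (s : hyp R k -> bool).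
Variables (C : point R k -> Prop).
Hypothesis CE : forall p, C p <-> forall h, h \in H -> side (s h) h p.

Definition graph_constraints (g : hyp R k) := [seq side_aff (s i) i g | i <- H].

Lemma cell_graphE g x :
  C (x, ht g x) <-> forall q, q \in graph_constraints g -> 0 <= aff q x.
Proof.
rewrite CE; split => [Cx _ /mapP [i iH ->]|Cx i iH]; first by rewrite -side_affE Cx.
by rewrite side_affE Cx //; apply: map_f.
Qed.

(* Step off [z] to the side of [g] occupied by [C]; the constraint of [j]
   vanishes identically on the graph of [j]. *)
Lemma facet_of_strict_point g j z r :
  g \in H -> j \in H -> g != j -> 0 < r -> ht g z = ht j z ->
  (forall i, i \in H -> i != g -> i != j -> forall y, near z y r ->
     0 < aff (side_aff (s i) i j) y) ->
  supports_facet C j.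
Proof.
move=> gH jH gj r0 zgj strict; set q := side_aff (s g) g j.
have qz : aff q z = 0 by rewrite aff_side_aff zgj subrr; case: (s g).
have q1 : q.1 != 0.
  apply: contra gj => q10; apply/eqP/(hyp_eq_of_ht (z := z)) => //; apply/eqP.
  by move: q10; rewrite /q /side_aff; case: (s g); rewrite /= subr_eq0 // eq_sym.
have n1 := norm1D1_gt0 q.1.
set rho := r / (4 * (1 + norm1 q.1)); set x1 := z + rho *: q.1.
have rho0 : 0 < rho by rewrite divr_gt0 ?mulr_gt0.
have zx1 : near z x1 (r / 2).
  apply: near_addZ; have -> : `|rho| * (1 + norm1 q.1) = r / 4.
    by rewrite gtr0_norm // /rho; field; rewrite gt_eqF.
  by rewrite ltr_pM2l // ltf_pV2 ?posrE // ltr_nat.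
have qx1 : 0 < aff q x1 by rewrite aff_addZ qz add0r mulr_gt0 ?vdot_gt0.
exists x1, (Order.min (r / 2) (aff q x1 / (1 + norm1 q.1))); split.
  by rewrite lt_min !divr_gt0.
move=> x x1x; apply/CE => i iH; rewrite side_affE.
have [->|ij] := eqVneq i j; first by rewrite aff_side_aff subrr; case: (s j).
have [->|ig] := eqVneq i g.
  by apply/ltW/(aff_near_gt0 qx1)/(near_le x1x); rewrite ge_min lexx orbT.
by apply/ltW/(strict i iH ig ij)/(near_half zx1)/(near_le x1x); rewrite ge_min lexx.
Qed.

(* Perturb along the flat [g /\ j] to a point where every other hyperplane is
   strict: by general position none of them contains a piece of the flat. *)
Lemma facet_of_flat_piece g j x0 eps :
  (1 <= k)%N -> general_position H -> g \in H -> j \in H -> g != j ->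
  0 < eps -> ht g x0 = ht j x0 ->
  (forall y, near x0 y eps -> ht g y = ht j y -> C (y, ht j y)) ->
  supports_facet C j.
Proof.
move=> k1 gen gH jH gj eps0 /aff_hdiff_eq0 x0gj piece.
set Ps := [seq side_aff (s i) i j | i <- H & (i != g) && (i != j)].
have PsP q : q \in Ps -> exists i, [/\ q = side_aff (s i) i j, i \in H, i != g & i != j].
  by move=> /mapP [i]; rewrite mem_filter => /andP [/andP [ig ij] iH] ->; exists i.
have [||z [r [r0 /aff_hdiff_eq0 zgj _ strict]]] :=
  @hyperplane_point_all_pos _ _ (hdiff g j) Ps x0 eps eps0 x0gj.
- move=> q /PsP [i [-> iH _ _]] y x0y /aff_hdiff_eq0 ygj.
  by rewrite -side_affE; move/CE: (piece y x0y ygj); apply.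
- move=> q /PsP [i [-> iH ig ij]] z r r0 /aff_hdiff_eq0 zgj zero.
  apply: (general_position_no_common_piece k1 gen gH jH iH gj ig ij r0 zgj) => y zy ygj.
  move/aff_hdiff_eq0: ygj (ygj) => /(zero y zy) /eqP.
  by rewrite aff_side_aff; case: (s i); rewrite subr_eq0 => /eqP // ->.
apply: (facet_of_strict_point gH jH gj r0 zgj) => i iH ig ij y zy.
by apply: strict zy; apply/mapP; exists i; rewrite // mem_filter ig ij.
Qed.

End Cell.

Lemma supports_ridge_piece (R : realFieldType) (k : nat) (S : point R k -> Prop) g h :
  supports_ridge S g h -> exists x0 eps, [/\ 0 < eps, ht g x0 = ht h x0 &
    forall y, near x0 y eps -> ht g y = ht h y -> vproj S y].
Proof.
move=> [u [w [c [_ _ _ [x0 [eps [x0gh eps0 piece]]]]]]]; exists x0, eps; split => //.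
by move=> y x0y ygh; exists (ht g y); case: (piece y ygh x0y).
Qed.

Section Prism.
Variables (R : realFieldType) (k : nat) (H : seq (hyp R k)) (s : hyp R k -> bool).
Variables (C sigma : point R k -> Prop) (hp hm : hyp R k) (p0 : point R k).
Hypothesis CE : forall p, C p <-> forall h, h \in H -> side (s h) h p.
Hypothesis p0_interior : forall h, h \in H -> sside (s h) h p0.
Hypothesis gen : generic_coords H.
Hypotheses (hpH : hp \in H) (hmH : hm \in H).
Hypotheses (C_below_hp : lies_below C hp) (C_above_hm : lies_above C hm).
Hypothesis sigmaE : forall p, sigma p <-> C p /\ prism_base C hp hm p.1.

Lemma lies_below_sign h : h \in H -> s h = false -> lies_below C h.
Proof. by move=> hH sh q /CE /(_ h hH); rewrite /side sh. Qed.

Lemma lies_above_sign h : h \in H -> s h = true -> lies_above C h.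
Proof. by move=> hH sh q /CE /(_ h hH); rewrite /side sh. Qed.

Lemma not_below_above h : h \in H -> lies_below C h -> lies_above C h -> False.
Proof.
move=> hH below above; have Cp0 : C p0.
  by apply/CE => i iH; move: (p0_interior iH); rewrite /side /sside; case: (s i) => /ltW.
by move: (below _ Cp0) (above _ Cp0) (p0_interior hH); rewrite /sside; case: (s h) => ? ? ?; lra.
Qed.

Lemma hp_neq_hm : hp != hm.
Proof. by apply/eqP => hpm; apply: (not_below_above hpH C_below_hp); rewrite hpm. Qed.

Lemma vproj_sigmaE x : vproj sigma x <-> C (x, ht hp x) /\ C (x, ht hm x).
Proof.
split => [[y /sigmaE [_ base]] //|base].
by exists (ht hp x); apply/sigmaE; split => //; case: base.
Qed.

Lemma floor_le_ceiling x y : C (x, y) -> ht hm x <= ht hp x.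
Proof. by move=> Cxy; move: (C_below_hp Cxy) (C_above_hm Cxy) => /= ? ?; lra. Qed.

(* If [C] were above [h], the floor would be squeezed between [h] and the
   ceiling along the piece, so the flats [hp /\ h] and [hm /\ h] would share a
   piece of their projections. *)
Lemma ceiling_piece_sign h x0 eps :
  h \in H -> h != hp -> h != hm -> 0 < eps -> ht hp x0 = ht h x0 ->
  (forall y, near x0 y eps -> ht hp y = ht h y -> vproj sigma y) -> s h = false.
Proof.
move=> hH hhp hhm eps0 x0h piece; case sh: (s h) => //; exfalso.
apply: (generic_coords_no_common_piece gen hpH hH hmH hH _ _ _ eps0 x0h).
- by rewrite eq_sym.
- by rewrite eq_sym.
- by rewrite (negbTE hp_neq_hm) /= eq_sym (negbTE hhp).
move=> y x0y yh; have [_ Cm] := (vproj_sigmaE y).1 (piece y x0y yh).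
by move: (lies_above_sign hH sh Cm) (floor_le_ceiling Cm) => /= ? ?; lra.
Qed.

Lemma floor_piece_sign h x0 eps :
  h \in H -> h != hp -> h != hm -> 0 < eps -> ht hm x0 = ht h x0 ->
  (forall y, near x0 y eps -> ht hm y = ht h y -> vproj sigma y) -> s h = true.
Proof.
move=> hH hhp hhm eps0 x0h piece; case sh: (s h) => //; exfalso.
apply: (generic_coords_no_common_piece gen hmH hH hpH hH _ _ _ eps0 x0h).
- by rewrite eq_sym.
- by rewrite eq_sym.
- by rewrite eq_sym (negbTE hp_neq_hm) /= eq_sym (negbTE hhm).
move=> y x0y yh; have [Cp _] := (vproj_sigmaE y).1 (piece y x0y yh).
by move: (lies_below_sign hH sh Cp) (floor_le_ceiling Cp) => /= ? ?; lra.
Qed.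

Lemma ridge_ceiling_lies_below h : h \in H -> h != hp -> h != hm ->
  supports_ridge sigma hp h -> lies_below C h.
Proof.
move=> hH hhp hhm /supports_ridge_piece [x0 [eps [eps0 x0h piece]]].
exact: lies_below_sign hH (ceiling_piece_sign hH hhp hhm eps0 x0h piece).
Qed.

Lemma ridge_floor_lies_above h : h \in H -> h != hp -> h != hm ->
  supports_ridge sigma hm h -> lies_above C h.
Proof.
move=> hH hhp hhm /supports_ridge_piece [x0 [eps [eps0 x0h piece]]].
exact: lies_above_sign hH (floor_piece_sign hH hhp hhm eps0 x0h piece).
Qed.

Definition prism_constraints := graph_constraints H s hp ++ graph_constraints H s hm.

Lemma vproj_sigma_constraints x :
  vproj sigma x <-> forall q, q \in prism_constraints -> 0 <= aff q x.
Proof.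
rewrite vproj_sigmaE !(cell_graphE CE); split => [[Cp Cm] q|Cx].
  by rewrite mem_cat => /orP []; [apply: Cp|apply: Cm].
by split=> q qP; apply: Cx; rewrite mem_cat qP ?orbT.
Qed.

Lemma polyhedron_vproj_sigma : polyhedron (vproj sigma).
Proof.
exists [seq (- q.1, q.2) | q <- prism_constraints] => x.
rewrite vproj_sigma_constraints; split => [Cx|/allP Cx q qP].
  by apply/allP => _ /mapP [q qP ->]; move: (Cx q qP); rewrite /= vdotNl /aff; lra.
by move: (Cx _ (map_f _ qP)); rewrite /= vdotNl /aff; lra.
Qed.

Lemma facet_hyp_vproj_sigma_flat c e : facet_hyp (vproj sigma) c e ->
  exists g j, [/\ (g == hp) || (g == hm), j \in H, j != g,
    forall x, vdot c x = e <-> ht g x = ht j x &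
    exists x0 eps, [/\ 0 < eps, ht g x0 = ht j x0 &
      forall y, near x0 y eps -> ht g y = ht j y -> vproj sigma y]].
Proof.
move=> /[dup] [[c0 _ [x0 [eps [cx0 eps0 piece]]]]].
move=> /(facet_hyp_constraint vproj_sigma_constraints) [q qP cq].
have [g [j [gP jH qE]]] : exists g j,
    [/\ (g == hp) || (g == hm), j \in H & q = side_aff (s j) j g].
  by move: qP; rewrite mem_cat => /orP [] /mapP [j jH ->];
    [exists hp, j; rewrite eqxx | exists hm, j; rewrite eqxx orbT].
have flatE x : vdot c x = e <-> ht g x = ht j x.
  by rewrite cq qE aff_side_aff; case: (s j); split => ?; lra.
have jg : j != g.
  apply: contra c0 => /eqP jg; rewrite -vdot_eq0.
  have cE x : vdot c x = e by apply/flatE; rewrite jg.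
  by rewrite (cE c) -(cE 0) vdot0r.
exists g, j; split => //; exists x0, eps; split => //; first exact/flatE.
by move=> y x0y /flatE cy; apply: piece.
Qed.

Definition facet_candidates (Hf : seq (hyp R k)) :=
  flat_eqn hp hm :: [seq flat_eqn (if s j then hm else hp) j | j <- Hf & (j != hp) && (j != hm)].

Lemma size_facet_candidates Hf : uniq Hf -> hp \in Hf -> hm \in Hf ->
  size (facet_candidates Hf) = (size Hf).-1.
Proof.
move=> Hf_uniq hpHf hmHf; rewrite /= size_map.
have -> : [seq j <- Hf | (j != hp) && (j != hm)] = rem hm (rem hp Hf).
  rewrite rem_filter ?rem_uniq // rem_filter // -filter_predI.
  by apply: eq_filter => j /=; rewrite andbC.
have hm_rem : hm \in rem hp Hf by rewrite mem_rem_uniq // inE eq_sym hp_neq_hm.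
have : (0 < size (rem hp Hf))%N by case: (rem hp Hf) hm_rem.
by rewrite !size_rem //; case: (size Hf) => [|[]].
Qed.

(* A facet of the projection lies on the projection of a flat [g /\ j] with
   [g] the ceiling or the floor; either [j] is the other one, or [j] supports a
   facet of [C] and the sign of [C] with respect to [j] decides which of the
   two flats it is. *)
Lemma facet_hyp_vproj_sigma c e (Hf : seq (hyp R k)) : (1 <= k)%N ->
  (forall h, h \in Hf <-> h \in H /\ supports_facet C h) ->
  facet_hyp (vproj sigma) c e ->
  exists2 ce, ce \in facet_candidates Hf & forall x, vdot c x = e <-> vdot ce.1 x = ce.2.
Proof.
move=> k1 HfE /facet_hyp_vproj_sigma_flat [g [j [gP jH jg flatE [x0 [eps [eps0 x0gj piece]]]]]].
have gH : g \in H by case/orP: gP => /eqP ->.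
have [jpm|] := boolP ((j == hp) || (j == hm)).
  exists (flat_eqn hp hm); first exact: mem_head.
  move=> x; rewrite flatE flat_eqnE.
  by case/orP: gP jpm jg => /eqP -> /orP [] /eqP ->; rewrite ?eqxx //; split => ->.
rewrite negb_or => /andP [jhp jhm].
have jHf : j \in Hf.
  apply/HfE; split => //; apply: (facet_of_flat_piece CE k1 gen.1 gH jH _ eps0 x0gj).
    by rewrite eq_sym.
  move=> y x0y ygj; have [Cp Cm] := (vproj_sigmaE y).1 (piece y x0y ygj).
  by rewrite -ygj; case/orP: gP => /eqP ->.
exists (flat_eqn (if s j then hm else hp) j).
  by rewrite inE; apply/orP; right; apply: map_f; rewrite mem_filter jhp jhm.
move=> x; rewrite flatE flat_eqnE; case/orP: gP => /eqP g_eq; rewrite g_eq in x0gj piece *.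
  by rewrite (ceiling_piece_sign jH jhp jhm eps0 x0gj piece).
by rewrite (floor_piece_sign jH jhp jhm eps0 x0gj piece).
Qed.

Lemma prism_ridges h : h \in H -> h != hp -> h != hm ->
  [/\ supports_ridge sigma hp h -> lies_below C h,
      supports_ridge sigma hm h -> lies_above C h
    & ~ (supports_ridge sigma hp h /\ supports_ridge sigma hm h)].
Proof.
move=> hH hhp hhm; have below := ridge_ceiling_lies_below hH hhp hhm.
have above := ridge_floor_lies_above hH hhp hhm.
by split => // -[/below ? /above]; apply: not_below_above.
Qed.

Lemma prism_projection_facets (Hf : seq (hyp R k)) :
  (1 <= k)%N -> supports_facet C hp -> supports_facet C hm -> uniq Hf ->
  (forall h, h \in Hf <-> h \in H /\ supports_facet C h) ->
  polyhedron (vproj sigma) /\ at_most_facets (vproj sigma) (size Hf).-1.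
Proof.
move=> k1 hp_facet hm_facet Hf_uniq HfE; split; first exact: polyhedron_vproj_sigma.
exists (facet_candidates Hf); split; last by move=> c e; apply: facet_hyp_vproj_sigma.
by rewrite size_facet_candidates //; apply/HfE.
Qed.

End Prism.

Theorem mainTheorem12 (R : realFieldType) (k : nat) (H : seq (hyp R k))
    (C : point R k -> Prop) (hp hm : hyp R k) (sigma : point R k -> Prop) :
  (1 <= k)%N -> uniq H -> generic_coords H -> is_dcell H C ->
  first_stage_prism H C hp hm sigma ->
  (forall h, h \in H -> h != hp -> h != hm ->
     [/\ supports_ridge sigma hp h -> lies_below C h,
         supports_ridge sigma hm h -> lies_above C h
       & ~ (supports_ridge sigma hp h /\ supports_ridge sigma hm h)]) /\
  (forall Hf : seq (hyp R k), uniq Hf ->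
     (forall h, h \in Hf <-> h \in H /\ supports_facet C h) ->
     polyhedron (vproj sigma) /\ at_most_facets (vproj sigma) (size Hf).-1).
Proof.
move=> k1 _ gen [s [CE [p0 p0_interior]]].
move=> [[hpH C_below_hp hp_facet] [[hmH C_above_hm hm_facet] [_ sigmaE]]].
split=> [h|Hf]; first exact: prism_ridges CE p0_interior gen hpH hmH C_below_hp C_above_hm sigmaE h.
exact: prism_projection_facets CE p0_interior gen hpH hmH C_below_hp C_above_hm sigmaE Hf k1 hp_facet hm_facet.
Qed.
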